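(* Let $f_0,f_2>0$, $\alpha>0$, let $0<\Lambda_1<\Lambda_{in}$, and let $\mathfrak{c}:[\Lambda_1,\Lambda_{in}]\to\mathbb{R}$ be continuous with $192 f_2\Lambda^2-2f_0\mathfrak{c}(\Lambda)\neq 0$ for all $\Lambda$. Define $$G_{\rm eff}(\Lambda)=\frac{3\pi}{192 f_2\Lambda^2-2f_0\,\mathfrak{c}(\Lambda)} .$$ Let $h:[\Lambda_1,\Lambda_{in}]\to\mathbb{R}$ be continuous with $1-\tfrac{4\pi}{3}G_{\rm eff}(\Lambda)h(\Lambda)\neq 0$, and define $G_{{\rm eff},H}(\Lambda)=\dfrac{G_{\rm eff}(\Lambda)}{1-\frac{4\pi}{3}G_{\rm eff}(\Lambda)h(\Lambda)}$. Use the time–energy relation $\Lambda=e^{-\alpha t}$, i.e. $t=-\alpha^{-1}\log\Lambda$, and for a function $\mathcal{M}$ of $t$ write $\mathcal{M}(\Lambda):=\mathcal{M}(t)$ at $t=-\alpha^{-1}\log\Lambda$. (a) (No gravitational memory.) If $\mathcal{M}>0$ is differentiable on the corresponding time interval and satisfies $\dfrac{d\mathcal{M}}{dt}=-\big(G_{\rm eff}(e^{-\alpha t})\,\mathcal{M}(t)\big)^{-2}$, then for every $\Lambda\in[\Lambda_1,\Lambda_{in}]$ $$\mathcal{M}(\Lambda)=\sqrt[3]{\mathcal{M}^3(\Lambda_{in})-\frac{1}{3\alpha\pi^2}\int_\Lambda^{\Lambda_{in}}\frac{(192 f_2x^2-2f_0\mathfrak{c}(x))^2}{x}\,dx}.$$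 (b) (Gravitational memory.) If $\mathcal{M}>0$ is differentiable on the corresponding time interval and satisfies $\dfrac{d\mathcal{M}}{dt}=-\big(G_{{\rm eff},H}(e^{-\alpha t})\,\mathcal{M}(t)\big)^{-2}$, then for every $\Lambda\in[\Lambda_1,\Lambda_{in}]$ $$\mathcal{M}(\Lambda)=\sqrt[3]{\mathcal{M}^3(\Lambda_{in})-\frac{3}{\alpha}\int_\Lambda^{\Lambda_{in}}\frac{\big(1-\frac{4\pi}{3}G_{\rm eff}(x)h(x)\big)^2}{x\,G_{\rm eff}(x)^2}\,dx}.$$
   Context: Physical interpretation: $\mathcal{M}$ is the mass of a primordial black hole evaporating by Hawking radiation during the inflationary epoch ($a(t)=e^{\alpha t}$, energy $\Lambda=1/a(t)$), $\Lambda_{in}$ the energy at which this epoch begins. $G_{\rm eff}$ is the effective gravitational constant of the noncommutative geometry model, with $\mathfrak{c}(\Lambda)=\mathrm{Tr}(MM^\dagger)$ the renormalization-group-running trace of the squared Majorana mass matrix, and $h(\Lambda)$ plays the role of $|H|^2$ for a (nearly constant) Higgs field $H$. $G_{{\rm eff},H}$ is the effective gravitational constant modified by the conformal coupling of gravity to the Higgs field. *)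

From Stdlib Require Import Reals.
From Coquelicot Require Import Coquelicot.
Open Scope R_scope.

Definition cbrt (y : R) : R :=
  if Rlt_dec 0 y then Rpower y (1/3)
  else if Rlt_dec y 0 then - Rpower (- y) (1/3) else 0.

Definition Geff (f0 f2 : R) (c : R -> R) (L : R) : R :=
  3 * PI / (192 * f2 * L ^ 2 - 2 * f0 * c L).

Definition GeffH (f0 f2 : R) (c h : R -> R) (L : R) : R :=
  Geff f0 f2 c L / (1 - 4 * PI / 3 * Geff f0 f2 c L * h L).

Definition time_of (alpha L : R) : R := - ln L / alpha.

(* Along the trajectory the quantity M(t)^3 + (3/alpha) * Int_{e^(-alpha t)}^{Lin} dx / (x G(x)^2)
   is constant: differentiating, 3 M^2 M' = -3 / G^2 cancels against the contribution of the lower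
   bound, which moves with speed -alpha e^(-alpha t).  Evaluating the invariant at the times of
   Lambda and Lambda_in and taking the (real) cube root of M^3 > 0 gives the mass; parts (a) and
   (b) are the cases G = G_eff and G = G_eff,H, after rewriting 1 / (x G^2). *)
From Stdlib Require Import Reals Lra.
From Coquelicot Require Import Coquelicot.
Open Scope R_scope.

Lemma cbrt_pow3 (y : R) : 0 < y -> cbrt (y ^ 3) = y.
Proof.
  intros Hy; unfold cbrt.
  destruct (Rlt_dec 0 (y ^ 3)) as [_ | Hneg]; [| exfalso; apply Hneg, pow_lt; lra].
  rewrite <- (Rpower_pow 3 y Hy), Rpower_mult.
  replace (INR 3 * (1 / 3)) with 1 by (simpl; field).
  apply Rpower_1; lra.
Qed.

Lemma ln_le (x y : R) : 0 < x -> x <= y -> ln x <= ln y.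
Proof. intros Hx [Hxy | ->]; [left; apply ln_increasing |]; lra. Qed.

Lemma exp_le (x y : R) : x <= y -> exp x <= exp y.
Proof. intros [Hxy | ->]; [left; apply exp_increasing |]; lra. Qed.

Lemma exp_time_of (alpha L : R) : 0 < alpha -> 0 < L -> exp (- alpha * time_of alpha L) = L.
Proof.
  intros Ha HL; unfold time_of.
  replace (- alpha * (- ln L / alpha)) with (ln L) by (field; lra).
  now apply exp_ln.
Qed.

Lemma time_of_le (alpha a b : R) :
  0 < alpha -> 0 < a -> a <= b -> time_of alpha b <= time_of alpha a.
Proof.
  intros Ha Ha0 Hab; unfold time_of, Rdiv.
  apply Rmult_le_compat_r; [left; apply Rinv_0_lt_compat; lra |].
  apply Ropp_le_contravar, ln_le; lra.
Qed.

Lemma time_of_lt (alpha a b : R) :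
  0 < alpha -> 0 < a -> a < b -> time_of alpha b < time_of alpha a.
Proof.
  intros Ha Ha0 Hab; unfold time_of, Rdiv.
  apply Rmult_lt_compat_r; [apply Rinv_0_lt_compat; lra |].
  apply Ropp_lt_contravar, ln_increasing; lra.
Qed.

Lemma exp_time_between (alpha a b t : R) : 0 < alpha -> 0 < a -> 0 < b ->
  time_of alpha b <= t <= time_of alpha a -> a <= exp (- alpha * t) <= b.
Proof.
  intros Ha Ha0 Hb0 Ht.
  rewrite <- (exp_time_of alpha a), <- (exp_time_of alpha b) by lra.
  split; apply exp_le; nra.
Qed.

Lemma continuous_Rmult (f g : R -> R) (x : R) :
  continuous f x -> continuous g x -> continuous (fun y => f y * g y) x.
Proof. intros; now apply (continuous_mult f g). Qed.

Lemma continuous_Rminus (f g : R -> R) (x : R) :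
  continuous f x -> continuous g x -> continuous (fun y => f y - g y) x.
Proof.
  intros Hf Hg; apply (continuous_plus f (fun y => - g y)); [exact Hf |].
  now apply (continuous_opp g).
Qed.

Lemma continuous_Rdiv (f g : R -> R) (x : R) :
  continuous f x -> continuous g x -> g x <> 0 -> continuous (fun y => f y / g y) x.
Proof. intros; apply continuous_Rmult; [| apply continuous_Rinv_comp]; auto. Qed.

Lemma continuous_Rpow (f : R -> R) (n : nat) (x : R) :
  continuous f x -> continuous (fun y => f y ^ n) x.
Proof.
  intros Hf; induction n as [| n IH]; simpl; [apply continuous_const |].
  now apply continuous_Rmult.
Qed.

(* For [a <= b] this is [Rmax a (Rmin b x)]; it extends a function continuous on [a, b] to a
   function continuous on all of R. *)
Definition clamp (a b x : R) : R := (a + b + Rabs (x - a) - Rabs (x - b)) / 2.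

Lemma clamp_in (a b x : R) : a < b -> a <= clamp a b x <= b.
Proof. intros; unfold clamp, Rabs; repeat destruct Rcase_abs; lra. Qed.

Lemma clamp_id (a b x : R) : a <= x <= b -> clamp a b x = x.
Proof. intros; unfold clamp, Rabs; repeat destruct Rcase_abs; lra. Qed.

Lemma continuous_clamp (a b x : R) : continuous (clamp a b) x.
Proof.
  unfold clamp; apply continuous_Rdiv; [| apply continuous_const | lra].
  apply continuous_Rminus; [apply (continuous_plus (fun _ => a + b)) |];
    [apply continuous_const | |]; apply continuous_Rabs_comp, continuous_Rminus;
    (apply continuous_id || apply continuous_const).
Qed.

Lemma continuous_on_clamp (a b : R) (g : R -> R) : a < b ->
  continuous_on (fun x => a <= x <= b) g <-> forall x, continuous (fun y => g (clamp a b y)) x.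
Proof.
  intros Hab; split.
  - intros Hg x.
    apply (filterlim_comp _ _ _ (clamp a b) g _
             (within (fun y => a <= y <= b) (locally (clamp a b x))));
      [| apply Hg, clamp_in, Hab].
    intros P HP; apply (continuous_clamp a b x) in HP.
    unfold filtermap in *; eapply filter_imp; [| exact HP]; simpl.
    intros z Hz; apply Hz, clamp_in, Hab.
  - intros Hg.
    apply (continuous_on_ext _ (fun y => g (clamp a b y))); [intros; now rewrite clamp_id |].
    apply continuous_on_forall; auto.
Qed.

Lemma is_derive_RInt_lower (f : R -> R) (b y : R) :
  (forall z, 0 < z -> continuous f z) -> 0 < b -> 0 < y ->
  is_derive (fun a => RInt f a b) y (- f y).
Proof.
  intros Hf Hb Hy; apply (is_derive_RInt' f _ y b); [| apply Hf; lra].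
  assert (Hr : 0 < y / 2) by lra.
  exists (mkposreal _ Hr); intros a Ha.
  apply (RInt_correct (V := R_CompleteNormedModule)), ex_RInt_continuous.
  intros z Hz; apply Hf.
  unfold ball in Ha; simpl in Ha; unfold AbsRing_ball, abs, minus, plus, opp in Ha; simpl in Ha.
  apply Rabs_lt_between in Ha.
  assert (0 < Rmin a b) by (apply Rmin_glb_lt; lra); lra.
Qed.

Section MassEvolution.

Variables (alpha L1 Lin : R) (G M : R -> R).
Hypotheses (halpha : 0 < alpha) (hL1 : 0 < L1) (hL1in : L1 < Lin)
  (hG : continuous_on (fun x => L1 <= x <= Lin) G)
  (hGnz : forall x, L1 <= x <= Lin -> G x <> 0)
  (hMpos : forall t, time_of alpha Lin <= t <= time_of alpha L1 -> 0 < M t)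
  (hM' : forall t, time_of alpha Lin <= t <= time_of alpha L1 ->
     is_derive M t (- / (G (exp (- alpha * t)) * M t) ^ 2)).

(* Clamped so that [a |-> RInt rate a Lin] is differentiable also at the endpoints L1 and Lin. *)
Let rate (x : R) : R := / (x * G (clamp L1 Lin x) ^ 2).

Let mass_invariant (t : R) : R := M t ^ 3 + 3 / alpha * RInt rate (exp (- alpha * t)) Lin.

Lemma continuous_rate (z : R) : 0 < z -> continuous rate z.
Proof.
  intros Hz; apply continuous_Rinv_comp.
  - apply continuous_Rmult; [apply continuous_id |].
    apply continuous_Rpow; exact (proj1 (continuous_on_clamp L1 Lin G hL1in) hG z).
  - apply Rmult_integral_contrapositive; split; [lra |].
    apply pow_nonzero, hGnz, clamp_in, hL1in.
Qed.

Lemma is_derive_mass_invariant (t : R) :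
  time_of alpha Lin <= t <= time_of alpha L1 -> is_derive mass_invariant t 0.
Proof.
  intros Ht; set (e := exp (- alpha * t)).
  assert (He : L1 <= e <= Lin) by (apply exp_time_between; lra).
  assert (HGe := hGnz e He); assert (HMt := hMpos t Ht).
  assert (Dcube := is_derive_pow M 3 t _ (hM' t Ht)).
  assert (De : is_derive (fun s => exp (- alpha * s)) t (- alpha * e)).
  { unfold e; auto_derive; [exact I | ring]. }
  assert (Dint := is_derive_comp (fun a => RInt rate a Lin) (fun s => exp (- alpha * s)) t _ _
                    (is_derive_RInt_lower rate Lin e continuous_rate ltac:(lra) ltac:(lra)) De).
  assert (D := is_derive_plus _ _ t _ _ Dcube (is_derive_scal _ t (3 / alpha) _ Dint)).
  unfold mass_invariant; match type of D with is_derive _ _ ?l => replace 0 with l; [exact D |] end.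
  unfold plus, scal, rate; simpl; unfold mult; simpl; fold e.
  rewrite clamp_id by exact He; field; repeat split; lra.
Qed.

Lemma mass_cube_invariant (L : R) : L1 <= L <= Lin ->
  M (time_of alpha L) ^ 3 + 3 / alpha * RInt rate L Lin = M (time_of alpha Lin) ^ 3.
Proof.
  intros [HL1L [HLin | ->]].
  - assert (Heq : mass_invariant (time_of alpha Lin) = mass_invariant (time_of alpha L)).
    { apply eq_is_derive; [| apply time_of_lt; lra].
      intros t Ht; apply is_derive_mass_invariant.
      split; [lra |]; apply Rle_trans with (time_of alpha L); [lra | apply time_of_le; lra]. }
    unfold mass_invariant in Heq; rewrite !exp_time_of, RInt_point in Heq by lra.
    simpl in Heq; unfold zero in Heq; simpl in Heq; lra.
  - rewrite RInt_point; simpl; unfold zero; simpl; ring.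
Qed.

Lemma RInt_rate (L : R) : L1 <= L <= Lin ->
  RInt rate L Lin = RInt (fun x => / (x * G x ^ 2)) L Lin.
Proof.
  intros HL; apply RInt_ext; intros x Hx.
  rewrite Rmin_left, Rmax_right in Hx by lra.
  unfold rate; rewrite clamp_id by lra; reflexivity.
Qed.

Lemma ex_RInt_mass_integrand (L : R) : L1 <= L <= Lin ->
  ex_RInt (fun x => / (x * G x ^ 2)) L Lin.
Proof.
  intros HL; apply (ex_RInt_ext rate).
  - intros x Hx; rewrite Rmin_left, Rmax_right in Hx by lra.
    unfold rate; rewrite clamp_id by lra; reflexivity.
  - apply (ex_RInt_continuous (V := R_CompleteNormedModule)); intros z Hz.
    rewrite Rmin_left, Rmax_right in Hz by lra; apply continuous_rate; lra.
Qed.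

Lemma mass_cbrt_formula (L : R) : L1 <= L <= Lin ->
  M (time_of alpha L) =
  cbrt (M (time_of alpha Lin) ^ 3 - 3 / alpha * RInt (fun x => / (x * G x ^ 2)) L Lin).
Proof.
  intros HL.
  rewrite <- RInt_rate, <- (mass_cube_invariant L HL) by exact HL.
  replace (_ + _ - _) with (M (time_of alpha L) ^ 3) by ring.
  rewrite cbrt_pow3; [reflexivity |].
  apply hMpos; split; apply time_of_le; lra.
Qed.

End MassEvolution.

Lemma Geff_neq0 (f0 f2 : R) (c : R -> R) (x : R) :
  192 * f2 * x ^ 2 - 2 * f0 * c x <> 0 -> Geff f0 f2 c x <> 0.
Proof.
  intros Hd; unfold Geff, Rdiv; assert (HPI := PI_RGT_0).
  apply Rmult_integral_contrapositive; split; [lra | now apply Rinv_neq_0_compat].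
Qed.

Lemma GeffH_neq0 (f0 f2 : R) (c h : R -> R) (x : R) :
  Geff f0 f2 c x <> 0 -> 1 - 4 * PI / 3 * Geff f0 f2 c x * h x <> 0 -> GeffH f0 f2 c h x <> 0.
Proof.
  intros HG Hk; unfold GeffH, Rdiv.
  apply Rmult_integral_contrapositive; split; [exact HG | now apply Rinv_neq_0_compat].
Qed.

Lemma continuous_on_Geff (f0 f2 L1 Lin : R) (c : R -> R) : L1 < Lin ->
  continuous_on (fun x => L1 <= x <= Lin) c ->
  (forall x, L1 <= x <= Lin -> 192 * f2 * x ^ 2 - 2 * f0 * c x <> 0) ->
  continuous_on (fun x => L1 <= x <= Lin) (Geff f0 f2 c).
Proof.
  intros Hab Hc Hcnz; apply continuous_on_clamp; [exact Hab |]; intros x.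
  apply continuous_Rdiv; [apply continuous_const | | apply Hcnz, clamp_in, Hab].
  apply continuous_Rminus; apply continuous_Rmult; try apply continuous_const.
  - apply continuous_Rpow, continuous_clamp.
  - exact (proj1 (continuous_on_clamp L1 Lin c Hab) Hc x).
Qed.

Lemma continuous_on_GeffH (f0 f2 L1 Lin : R) (c h : R -> R) : L1 < Lin ->
  continuous_on (fun x => L1 <= x <= Lin) (Geff f0 f2 c) ->
  continuous_on (fun x => L1 <= x <= Lin) h ->
  (forall x, L1 <= x <= Lin -> 1 - 4 * PI / 3 * Geff f0 f2 c x * h x <> 0) ->
  continuous_on (fun x => L1 <= x <= Lin) (GeffH f0 f2 c h).
Proof.
  intros Hab HG Hh Hhnz; apply continuous_on_clamp; [exact Hab |]; intros x.
  assert (HGc := proj1 (continuous_on_clamp L1 Lin _ Hab) HG x).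
  apply continuous_Rdiv; [exact HGc | | apply Hhnz, clamp_in, Hab].
  apply continuous_Rminus; [apply continuous_const |].
  apply continuous_Rmult; [apply continuous_Rmult; [apply continuous_const | exact HGc] |].
  exact (proj1 (continuous_on_clamp L1 Lin h Hab) Hh x).
Qed.

Theorem proposition4p9
  (f0 f2 alpha L1 Lin : R) (c h : R -> R)
  (hf0 : 0 < f0) (hf2 : 0 < f2) (halpha : 0 < alpha)
  (hL1 : 0 < L1) (hL1in : L1 < Lin)
  (hc : continuous_on (fun x => L1 <= x <= Lin) c)
  (hcnz : forall x, L1 <= x <= Lin -> 192 * f2 * x ^ 2 - 2 * f0 * c x <> 0)
  (hh : continuous_on (fun x => L1 <= x <= Lin) h)
  (hhnz : forall x, L1 <= x <= Lin -> 1 - 4 * PI / 3 * Geff f0 f2 c x * h x <> 0) :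
  (* (a) no gravitational memory *)
  (forall M : R -> R,
     (forall t, time_of alpha Lin <= t <= time_of alpha L1 -> 0 < M t) ->
     (forall t, time_of alpha Lin <= t <= time_of alpha L1 ->
        is_derive M t (- / (Geff f0 f2 c (exp (- alpha * t)) * M t) ^ 2)) ->
     forall L, L1 <= L <= Lin ->
       M (time_of alpha L) =
       cbrt (M (time_of alpha Lin) ^ 3
             - 1 / (3 * alpha * PI ^ 2) *
               RInt (fun x => (192 * f2 * x ^ 2 - 2 * f0 * c x) ^ 2 / x) L Lin))
  /\
  (* (b) gravitational memory *)
  (forall M : R -> R,
     (forall t, time_of alpha Lin <= t <= time_of alpha L1 -> 0 < M t) ->
     (forall t, time_of alpha Lin <= t <= time_of alpha L1 ->
        is_derive M t (- / (GeffH f0 f2 c h (exp (- alpha * t)) * M t) ^ 2)) ->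
     forall L, L1 <= L <= Lin ->
       M (time_of alpha L) =
       cbrt (M (time_of alpha Lin) ^ 3
             - 3 / alpha *
               RInt (fun x => (1 - 4 * PI / 3 * Geff f0 f2 c x * h x) ^ 2
                              / (x * Geff f0 f2 c x ^ 2)) L Lin)).
Proof.
  assert (HPI := PI_RGT_0).
  assert (HG := continuous_on_Geff f0 f2 L1 Lin c hL1in hc hcnz).
  assert (HGnz : forall x, L1 <= x <= Lin -> Geff f0 f2 c x <> 0)
    by (intros; apply Geff_neq0, hcnz; assumption).
  split; intros M HM HM' L HL.
  - rewrite (mass_cbrt_formula alpha L1 Lin _ M halpha hL1 hL1in HG HGnz HM HM' L HL).
    rewrite (RInt_ext (fun x => (192 * f2 * x ^ 2 - 2 * f0 * c x) ^ 2 / x)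
               (fun x => scal (9 * PI ^ 2) (/ (x * Geff f0 f2 c x ^ 2)))).
    + rewrite (RInt_scal (V := R_CompleteNormedModule))
        by exact (ex_RInt_mass_integrand L1 Lin _ hL1 hL1in HG HGnz L HL).
      unfold scal; simpl; unfold mult; simpl; do 2 f_equal; field; lra.
    + intros x Hx; rewrite Rmin_left, Rmax_right in Hx by lra.
      unfold scal; simpl; unfold mult; simpl; unfold Geff.
      assert (Hd := hcnz x ltac:(lra)); field; repeat split; lra.
  - assert (HGH := continuous_on_GeffH f0 f2 L1 Lin c h hL1in HG hh hhnz).
    assert (HGHnz : forall x, L1 <= x <= Lin -> GeffH f0 f2 c h x <> 0)
      by (intros; apply GeffH_neq0; [apply HGnz | apply hhnz]; assumption).
    rewrite (mass_cbrt_formula alpha L1 Lin _ M halpha hL1 hL1in HGH HGHnz HM HM' L HL).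
    do 3 f_equal; apply RInt_ext; intros x Hx; rewrite Rmin_left, Rmax_right in Hx by lra.
    assert (Hx' : L1 <= x <= Lin) by lra.
    assert (HGx := HGnz x Hx'); assert (Hhx := hhnz x Hx').
    unfold GeffH; simpl; field; repeat split; lra.
Qed.
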